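(* Let $G$ and $H$ be two nontrivial connected graphs and let $S\subseteq V(G)$ and $T\subseteq V(H)$ be cycle convex sets in $G$ and $H$ respectively. Then $S\times T$ is cycle convex in $G\Box H$.
   Context: All graphs are finite, simple and undirected. For a graph $G$ and $S\subseteq V(G)$, the cycle interval $\langle S\rangle$ consists of the vertices of $S$ together with every vertex $w\in V(G)\setminus S$ such that $G[S\cup\{w\}]$ contains a cycle through $w$; $S$ is cycle convex if $\langle S\rangle=S$. The Cartesian product $G\Box H$ has vertex set $V(G)\times V(H)$, with $(g_1,h_1)\sim(g_2,h_2)$ iff ($g_1\sim g_2$ and $h_1=h_2$) or ($g_1=g_2$ and $h_1\sim h_2$). A graph is nontrivial if it has at least two vertices. *)

From mathcomp Require Import all_boot.
Set Implicit Arguments. Unset Strict Implicit. Unset Printing Implicit Defensive.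

Definition simple_graph (V : finType) (e : rel V) : Prop :=
  symmetric e /\ irreflexive e.

Definition connected_graph (V : finType) (e : rel V) : Prop :=
  forall x y : V, connect e x y.

Definition nontrivial (V : finType) : Prop := 1 < #|V|.

Definition is_graph_cycle (V : finType) (e : rel V) (c : seq V) : bool :=
  [&& 2 < size c, uniq c & cycle e c].

Definition in_cycle_interval (V : finType) (e : rel V) (S : {set V}) (w : V) : Prop :=
  w \in S \/
  (w \notin S /\ exists c : seq V,
     [/\ is_graph_cycle e c, w \in c & all (fun v => (v \in S) || (v == w)) c]).

Definition cycle_convex (V : finType) (e : rel V) (S : {set V}) : Prop :=
  forall w, in_cycle_interval e S w <-> w \in S.

Definition box_rel (V W : finType) (e1 : rel V) (e2 : rel W) : rel (V * W) :=
  fun x y => (e1 x.1 y.1 && (x.2 == y.2)) || ((x.1 == y.1) && e2 x.2 y.2).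

From mathcomp Require Import all_boot.

Set Implicit Arguments.
Unset Strict Implicit.
Unset Printing Implicit Defensive.

(* Let (g, h) lie outside S x T on a cycle whose other vertices are in S x T,
   say with g \notin S.  Both neighbours of (g, h) on the cycle have first
   coordinate in S, so they are (a, h) and (b, h) with a, b adjacent to g and
   a != b.  Projecting the rest of the cycle onto G gives a walk from a to b
   inside S; shortening it to a path and closing it through g yields a cycle
   of G[S u {g}] through g, against the cycle convexity of S. *)

Definition reflc (T : eqType) (e : rel T) : rel T := fun x y => (x == y) || e x y.

Lemma uniq_path_reflc (T : eqType) (e : rel T) x p :
  uniq (x :: p) -> path (reflc e) x p -> path e x p.
Proof.
elim: p x => [//|y p IHp] x /andP[xNyp up] /= /andP[/orP[/eqP xy|-> /=] yp].
  by rewrite xy mem_head in xNyp.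
exact: IHp.
Qed.

Lemma is_graph_cycle_rot (T : finType) (e : rel T) i (c : seq T) :
  is_graph_cycle e (rot i c) = is_graph_cycle e c.
Proof. by rewrite /is_graph_cycle size_rot rot_uniq rot_cycle. Qed.

Lemma cycle_interval_of_walk (V : finType) (e : rel V) (S : {set V}) g a p :
  g \notin S -> all (mem S) (a :: p) -> path (reflc e) a p ->
  e g a -> e (last a p) g -> last a p != a -> in_cycle_interval e S g.
Proof.
move=> gNS Sap walk_ap ega ebg ba; right; split=> //.
case: (shortenP walk_ap) ebg ba => q path_aq uniq_aq sub_qp ebg ba.
have Saq : all (mem S) (a :: q).
  apply/allP=> x /predU1P[->|/sub_qp xp]; apply: (allP Sap).
    exact: mem_head.
  by rewrite inE xp orbT.
have gNaq : g \notin a :: q by apply: contra gNS => /(allP Saq).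
exists [:: g, a & q]; split; last 2 first.
- exact: mem_head.
- by rewrite /= eqxx orbT; apply: sub_all Saq => x /= ->.
rewrite /is_graph_cycle cons_uniq gNaq uniq_aq /cycle rcons_path /= ega ebg.
rewrite (uniq_path_reflc uniq_aq path_aq) !ltnS lt0n size_eq0 !andbT.
by apply: contraNneq ba => ->.
Qed.

Section BoxProduct.

Variables (V W : finType) (e1 : rel V) (e2 : rel W).

Lemma box_rel_fst_neq x y :
  box_rel e1 e2 x y -> x.1 != y.1 -> e1 x.1 y.1 /\ x.2 = y.2.
Proof.
case/orP=> /andP[xy1 xy2] Nxy1; first by split=> //; apply/eqP.
by rewrite xy1 in Nxy1.
Qed.

Lemma box_path_fst x p :
  path (box_rel e1 e2) x p -> path (reflc e1) x.1 (map fst p).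
Proof.
rewrite path_map; apply: sub_path => y z.
by case/orP=> /andP[yz _]; apply/orP; [right | left].
Qed.

Lemma box_rel_swap x y :
  box_rel e2 e1 (swap_pair x) (swap_pair y) = box_rel e1 e2 x y.
Proof. by rewrite /box_rel /= orbC andbC [(_ == _) && _]andbC. Qed.

Lemma is_graph_cycle_box_swap c :
  is_graph_cycle (box_rel e2 e1) (map swap_pair c) = is_graph_cycle (box_rel e1 e2) c.
Proof.
by rewrite /is_graph_cycle size_map (map_inj_uniq (can_inj swap_pairK))
  cycle_map (eq_cycle box_rel_swap).
Qed.

Lemma box_rooted_cycle_fst_interval (S : {set V}) g h a (p : seq (V * W)) :
  g \notin S -> p != [::] -> uniq [:: (g, h), a & p] ->
  cycle (box_rel e1 e2) [:: (g, h), a & p] -> all (fun x => x.1 \in S) (a :: p) ->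
  in_cycle_interval e1 S g.
Proof.
move=> gNS; case: p => [//|a1 q] _.
have : last a (a1 :: q) \in a1 :: q := mem_last a1 q.
move: (a1 :: q) => {a1 q} p; set b := last a p => bp.
case/andP=> _ /andP[aNp _].
rewrite /cycle rcons_path => /andP[/andP[gha path_ap] bgh] /andP[aS pS].
have bS : b.1 \in S := allP pS b bp.
have gNa : g != a.1 by apply: contraNneq gNS => ->.
have bNg : b.1 != g by apply: contraNneq gNS => <-.
have [ga hga] := box_rel_fst_neq gha gNa.
have [bg bgh2] := box_rel_fst_neq bgh bNg.
apply: (cycle_interval_of_walk (p := map fst p)) gNS _ _ ga _ _.
- by rewrite /= aS all_map.
- exact: box_path_fst path_ap.
- by rewrite last_map.
rewrite last_map; apply: contraNneq aNp => ba.
by rewrite -(injective_projections b a ba (etrans bgh2 hga)).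
Qed.

Lemma box_cycle_fst_interval (S : {set V}) g h c :
  g \notin S -> is_graph_cycle (box_rel e1 e2) c -> (g, h) \in c ->
  all (fun x => (x.1 \in S) || (x == (g, h))) c -> in_cycle_interval e1 S g.
Proof.
move=> gNS + /rot_to[i p rot_c].
rewrite -(is_graph_cycle_rot _ i) -(eq_all_r (mem_rot i c)) rot_c.
case/and3P=> size_p uniq_p cycle_p /andP[_ /allP Sp].
case: p {rot_c} size_p uniq_p cycle_p Sp => [//|a p] size_p uniq_p cycle_p Sp.
have {}Sp : all (fun x => x.1 \in S) (a :: p).
  apply/allP => x xp; have /orP[//|/eqP xgh] := Sp x xp.
  by move: uniq_p; rewrite cons_uniq -xgh xp.
apply: box_rooted_cycle_fst_interval gNS _ uniq_p cycle_p Sp.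
by apply: contraTneq size_p => ->.
Qed.

End BoxProduct.

Lemma box_cycle_snd_interval (V W : finType) (e1 : rel V) (e2 : rel W)
  (T : {set W}) g h (c : seq (V * W)) :
  h \notin T -> is_graph_cycle (box_rel e1 e2) c -> (g, h) \in c ->
  all (fun x => (x.2 \in T) || (x == (g, h))) c -> in_cycle_interval e2 T h.
Proof.
move=> hNT cycle_c ghc Tc.
apply: (box_cycle_fst_interval (e2 := e1) (h := g) (c := map swap_pair c) hNT).
- by rewrite is_graph_cycle_box_swap.
- exact: (map_f swap_pair ghc).
rewrite all_map; apply: sub_all Tc => -[x y] /=.
by rewrite !xpair_eqE andbC.
Qed.

Theorem mainTheorem4 (V W : finType) (e1 : rel V) (e2 : rel W)
  (S : {set V}) (T : {set W}) :
  simple_graph e1 -> simple_graph e2 ->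
  nontrivial V -> nontrivial W ->
  connected_graph e1 -> connected_graph e2 ->
  cycle_convex e1 S -> cycle_convex e2 T ->
  cycle_convex (box_rel e1 e2) (setX S T).
Proof.
move=> _ _ _ _ _ _ convS convT [g h]; split; last by left.
case=> [//|[ghNST [c [cycle_c ghc STc]]]].
have [Sc Tc] : all (fun x => (x.1 \in S) || (x == (g, h))) c /\
               all (fun x => (x.2 \in T) || (x == (g, h))) c.
  by split; apply: sub_all STc => -[x y]; rewrite in_setX /=;
    case/orP=> [/andP[xS yT]|->]; rewrite ?xS ?yT ?orbT.
move: ghNST; rewrite in_setX negb_and => /orP[gNS|hNT].
- by have /convS := box_cycle_fst_interval gNS cycle_c ghc Sc; rewrite (negPf gNS).
- by have /convT := box_cycle_snd_interval hNT cycle_c ghc Tc; rewrite (negPf hNT).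
Qed.
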